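(* Let $\mathbf v=(v_1,\dots,v_m)$ and $\mathbf k=(k_1,\dots,k_m)$ be $m$-tuples of positive integers with $k_i\le v_i$ for all $i$, and let $v_{\max}=\max_i v_i$ and $k_{\min}=\min_i k_i$. Suppose there is an index $i$ with $v_i=v_{\max}$ and $k_i=k_{\min}\ge2$. Then $C(\mathbf v,\mathbf k,2)=C(v_{\max},k_{\min},2)$.
   Context: Let $X_1,\dots,X_m$ be pairwise disjoint sets with $|X_i|=v_i$. A block is an $m$-tuple $(B_1,\dots,B_m)$ with $B_i\subseteq X_i$, $|B_i|=k_i$. An $m$-tuple of sets $(T_1,\dots,T_m)$ is $(\mathbf v,\mathbf k,2)$-admissible if $T_i\subseteq X_i$, $|T_i|\le k_i$ and $\sum|T_i|=2$; it is contained in a block if $T_i\subseteq B_i$ for all $i$. A ${\rm GC}(\mathbf v,\mathbf k,2)$ is a finite family (repetitions allowed) of blocks containing every admissible tuple in at least one block; $C(\mathbf v,\mathbf k,2)$ is the minimum number of blocks. For integers $v\ge k\ge2$, $C(v,k,2)$ is the ordinary covering number: the minimum number of $k$-subsets of a $v$-set such that every $2$-subset is contained in at least one of them. *)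

From mathcomp Require Import all_boot.
Unset Printing Implicit Defensive.

Definition is_cover (v k : nat) (F : seq {set 'I_v}) : Prop :=
  (forall B, B \in F -> #|B| = k) /\
  (forall P : {set 'I_v}, #|P| = 2 -> exists2 B, B \in F & P \subset B).

Definition is_covering_number (v k c : nat) : Prop :=
  (exists F : seq {set 'I_v}, size F = c /\ is_cover v k F) /\
  (forall F : seq {set 'I_v}, is_cover v k F -> c <= size F).

(* The disjoint union X_1 u ... u X_m with X_i = 'I_(v i); an element is a pair
   (i, x) with x : 'I_(v i).  Subsets of the ground set correspond exactly to
   m-tuples (T_1,...,T_m) with T_i subset of X_i. *)
Definition ground {m : nat} (v : 'I_m -> nat) : finType :=
  {i : 'I_m & 'I_(v i)}.

Definition part {m : nat} {v : 'I_m -> nat} (A : {set ground v}) (i : 'I_m)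
  : {set ground v} := [set x in A | tag x == i].

Definition is_block {m : nat} (v k : 'I_m -> nat) (B : {set ground v}) : Prop :=
  forall i, #|part B i| = k i.

Definition admissible {m : nat} (v k : 'I_m -> nat) (T : {set ground v}) : Prop :=
  (forall i, #|part T i| <= k i) /\ #|T| = 2.

(* A GC(v,k,2): a family of blocks containing every admissible tuple in at
   least one block (containment T_i subset B_i for all i is T \subset B). *)
Definition is_GC {m : nat} (v k : 'I_m -> nat) (F : seq {set ground v}) : Prop :=
  (forall B, B \in F -> is_block v k B) /\
  (forall T, admissible v k T -> exists2 B, B \in F & T \subset B).

Definition is_GC_number {m : nat} (v k : 'I_m -> nat) (c : nat) : Prop :=
  (exists F : seq {set ground v}, size F = c /\ is_GC v k F) /\
  (forall F : seq {set ground v}, is_GC v k F -> c <= size F).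

(** Projecting onto a coordinate [i0] with [v i0 = v_max] and [k i0 = k_min]
    turns a GC(v,k,2) into a covering C(v_max,k_min,2) of the same size, since
    every pair inside [X_i0] is admissible. Conversely, identifying each [X_i]
    with an initial segment of [X_i0], a block [A] of a covering yields a
    generalized block by extending each trace [A ∩ X_i] (of size at most
    [k_min <= k_i]) to a [k_i]-subset of [X_i]; any admissible pair meets [X_i0]
    in at most two points, which lie in a common block [A]. *)

From mathcomp Require Import all_boot.
From Stdlib Require Import Wf_nat Classical.

Set Implicit Arguments.
Unset Strict Implicit.

Lemma exists_superset_card (T : finType) (S : {set T}) (n : nat) :
  #|S| <= n <= #|T| -> exists2 B : {set T}, S \subset B & #|B| = n.
Proof.
case/andP=> leSn lenT.
have /card_geqP[s [uniq_s size_s sub_s]] : n - #|S| <= #|~: S|.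
  by rewrite leq_subLR cardsC.
exists (S :|: [set x in s]); first exact: subsetUl.
have disj : S :&: [set x in s] = set0.
  by apply/setP => x; rewrite !inE; apply/andP => -[xS /sub_s]; rewrite inE xS.
have card_s : #|[set x in s]| = size s.
  by rewrite -(card_uniqP uniq_s); apply: eq_card => x; rewrite inE.
by rewrite cardsU disj cards0 subn0 card_s size_s subnKC.
Qed.

Lemma ex_minimal (P : nat -> Prop) :
  (exists n, P n) -> exists2 c, P c & forall n, P n -> c <= n.
Proof.
move=> exP.
have [c [[Pc minc] _]] :=
  dec_inh_nat_subset_has_unique_least_element P (fun n => classic (P n)) exP.
by exists c => // n /minc /leP.
Qed.

Lemma is_cover_subset (V K : nat) (F : seq {set 'I_V}) (S : {set 'I_V}) :
  is_cover V K F -> 2 <= V -> #|S| <= 2 -> exists2 B, B \in F & S \subset B.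
Proof.
move=> [_ coverF] leV2 leS2.
have [P sub_SP card_P] : exists2 P : {set 'I_V}, S \subset P & #|P| = 2.
  by apply: exists_superset_card; rewrite leS2 card_ord.
have [B BF sub_PB] := coverF P card_P.
by exists B; last exact: subset_trans sub_PB.
Qed.

Lemma exists_covering_number (V K : nat) :
  2 <= K <= V -> exists c, is_covering_number V K c.
Proof.
case/andP=> le2K leKV.
have cover_all : is_cover V K (enum [set B : {set 'I_V} | #|B| == K]).
  split=> [B | P card_P]; first by rewrite mem_enum inE => /eqP.
  have [B sub_PB card_B] : exists2 B : {set 'I_V}, P \subset B & #|B| = K.
    by apply: exists_superset_card; rewrite card_P le2K card_ord.
  by exists B; rewrite // mem_enum inE card_B.
have [c [F [<- coverF]] minc] :=
  ex_minimal (P := fun c => exists F, size F = c /\ is_cover V K F)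
             (ex_intro _ _ (ex_intro _ _ (conj erefl cover_all))).
by exists (size F); split; [exists F | move=> G coverG; apply: minc; exists G].
Qed.

Section Slices.

Variables (m : nat) (v : 'I_m -> nat).

Definition slice (A : {set ground v}) (i : 'I_m) : {set 'I_(v i)} :=
  [set y | Tagged (fun j => 'I_(v j)) y \in A].

Lemma part_slice (A : {set ground v}) (i : 'I_m) :
  part A i = Tagged (fun j => 'I_(v j)) @: slice A i.
Proof.
apply/setP=> -[j y]; rewrite inE /=; apply/andP/imsetP => [[yA /eqP ji] | [z]].
  by subst j; exists y; rewrite ?inE.
rewrite inE => zA yz; split; first by rewrite yz.
by have /= -> := congr1 tag yz.
Qed.

Lemma card_part (A : {set ground v}) (i : 'I_m) : #|part A i| = #|slice A i|.
Proof. by rewrite part_slice card_imset //; apply: eq_from_Tagged. Qed.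

Lemma is_cover_slice (k : 'I_m -> nat) (i0 : 'I_m) (F : seq {set ground v}) :
  2 <= k i0 -> is_GC v k F -> is_cover (v i0) (k i0) [seq slice B i0 | B <- F].
Proof.
move=> le2k [blockF GCF]; split=> [_ /mapP[B BF ->] | P card_P].
  by rewrite -card_part; apply: blockF.
pose T := Tagged (fun j => 'I_(v j)) @: P.
have card_T : #|T| = 2 by rewrite card_imset //; apply: eq_from_Tagged.
have admT : admissible v k T.
  split=> // i; have [<- | ne_i0i] := eqVneq i0 i.
    rewrite (leq_trans _ le2k) // -card_T subset_leq_card //.
    by apply/subsetP=> x; rewrite inE => /andP[].
  suff -> : part T i = set0 by rewrite cards0.
  by apply/setP=> x; rewrite !inE; apply/andP=> -[/imsetP[y _ ->]]; rewrite (negbTE ne_i0i).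
have [B BF sub_TB] := GCF T admT.
exists (slice B i0); first exact: map_f.
by apply/subsetP=> y Py; rewrite inE (subsetP sub_TB) ?imset_f.
Qed.

End Slices.

Section Lifting.

Variables (m : nat) (v k : 'I_m -> nat) (i0 : 'I_m).
Hypotheses (le_kv : forall i, k i <= v i) (le_v : forall i, v i <= v i0)
           (le_k : forall i, k i0 <= k i).

Definition trace (A : {set 'I_(v i0)}) (i : 'I_m) : {set 'I_(v i)} :=
  [set y | widen_ord (le_v i) y \in A].

Definition extend (A : {set 'I_(v i0)}) (i : 'I_m) : {set 'I_(v i)} :=
  odflt set0 [pick C : {set 'I_(v i)} | (trace A i \subset C) && (#|C| == k i)].

Definition lift (A : {set 'I_(v i0)}) : {set ground v} :=
  [set x | tagged x \in extend A (tag x)].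

Lemma card_trace (A : {set 'I_(v i0)}) (i : 'I_m) : #|trace A i| <= #|A|.
Proof.
have widen_inj : injective (widen_ord (le_v i)).
  by move=> y z /(congr1 val) /= /val_inj.
rewrite -(card_imset _ widen_inj) subset_leq_card //.
by apply/subsetP=> _ /imsetP[y + ->]; rewrite inE.
Qed.

Lemma extend_spec (A : {set 'I_(v i0)}) (i : 'I_m) :
  #|A| <= k i0 -> trace A i \subset extend A i /\ #|extend A i| = k i.
Proof.
move=> le_Ak; rewrite /extend; case: pickP => [C /andP[-> /eqP] // | noC].
have [C sub_C card_C] : exists2 C : {set 'I_(v i)}, trace A i \subset C & #|C| = k i.
  apply: exists_superset_card.
  by rewrite card_ord le_kv (leq_trans (card_trace A i)) // (leq_trans le_Ak).
by have := noC C; rewrite sub_C card_C eqxx.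
Qed.

Lemma slice_lift (A : {set 'I_(v i0)}) (i : 'I_m) : slice (lift A) i = extend A i.
Proof. by apply/setP=> y; rewrite !inE. Qed.

Lemma is_GC_lift (F : seq {set 'I_(v i0)}) :
  2 <= v i0 -> is_cover (v i0) (k i0) F -> is_GC v k [seq lift A | A <- F].
Proof.
move=> le2v coverF; have [blockF _] := coverF.
split=> [_ /mapP[A AF ->] i | T [_ /eqP/cards2P[p [q [_ ->]]]]].
  by rewrite card_part slice_lift; case: (extend_spec i (eq_leq (blockF A AF))).
pose w (x : ground v) := widen_ord (le_v (tag x)) (tagged x).
have card_pq : #|[set w p; w q]| <= 2 by rewrite cards2; case: (_ != _).
have [A AF sub_A] := is_cover_subset coverF le2v card_pq.
exists (lift A); first exact: map_f.
have in_lift x : w x \in A -> x \in lift A.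
  have [sub_trace _] := extend_spec (tag x) (eq_leq (blockF A AF)).
  by move=> xA; rewrite inE (subsetP sub_trace) // inE.
by apply/subsetP=> x /set2P[] ->; apply: in_lift; rewrite (subsetP sub_A) ?set21 ?set22.
Qed.

End Lifting.

Theorem corollary3p19 (m : nat) (v k : 'I_m -> nat) (i0 : 'I_m) :
  (forall i, 0 < k i) ->
  (forall i, k i <= v i) ->
  (forall i, v i <= v i0) ->
  (forall i, k i0 <= k i) ->
  2 <= k i0 ->
  exists c, is_GC_number v k c /\ is_covering_number (v i0) (k i0) c.
Proof.
(* Positivity of [k] is implied by [le_k] and [le2k]. *)
move=> _ le_kv le_v le_k le2k.
have le2kv : 2 <= k i0 <= v i0 by rewrite le2k le_kv.
have [c [[F [<- coverF]] minF]] := exists_covering_number le2kv.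
exists (size F); split; last by split; [exists F | ].
split.
  exists [seq lift k le_v A | A <- F]; rewrite size_map.
  by split=> //; apply: is_GC_lift => //; apply: leq_trans le2k (le_kv i0).
move=> G GC_G; rewrite -(size_map (fun B => slice B i0)).
exact/minF/is_cover_slice.
Qed.
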